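(* Suppose $F\in\mathcal{A}\setminus\{\delta_0\}$ is not aperiodic. Then there exist $m\in\{2,3,4,\dots\}$ and an aperiodic probability $\widetilde{F}\in\mathcal{A}$ such that $\mathrm{supp}(F)\subseteq\{0,m,2m,\dots\}$ and $F(km)=\widetilde{F}(k)$ for all $k\in\mathbb{Z}^+$.
   Context: $\mathbb{P}(\mathbb{Z}^+)$ is the set of functions $F:\mathbb{Z}\to[0,1]$ with $\sum_kF(k)=1$ and $F(k)=0$ for $k<0$; $\delta_m$ is the point mass at $m$; $F^{(n)}$ is the $n$-th convolution power. $\mathcal{A}=\{F\in\mathbb{P}(\mathbb{Z}^+):\sup_{n\in\mathbb{N}}n\sum_k|F^{(n)}(k)-F^{(n+1)}(k)|<\infty\}$. $F$ is adapted if $\mathrm{supp}(F)=\{k:F(k)\ne0\}$ generates the additive group $\mathbb{Z}$, and aperiodic if every translate $\delta_m*F$, $m\in\mathbb{Z}$, is adapted. *)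

From Stdlib Require Import Reals ZArith.
Open Scope R_scope.

Definition delta (m : Z) : Z -> R := fun k => if Z.eq_dec k m then 1 else 0.

Definition in_PZp (F : Z -> R) : Prop :=
  (forall k, 0 <= F k <= 1) /\
  (forall k, (k < 0)%Z -> F k = 0) /\
  infinite_sum (fun n : nat => F (Z.of_nat n)) 1.

Definition conv (F G : Z -> R) : Z -> R := fun k =>
  if Z.ltb k 0 then 0
  else sum_f_R0 (fun j : nat => F (Z.of_nat j) * G (k - Z.of_nat j)%Z) (Z.to_nat k).

Fixpoint conv_pow (F : Z -> R) (n : nat) : Z -> R :=
  match n with
  | O => delta 0
  | S n' => conv F (conv_pow F n')
  end.

(* The class A: sup_n n * sum_k |F^(n)(k) - F^(n+1)(k)| < infinity.
   (Terms with k < 0 vanish; the series has nonnegative terms, so its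
   value is the sup of its partial sums.) *)
Definition in_A (F : Z -> R) : Prop :=
  in_PZp F /\
  exists C : R, forall (n N : nat),
    INR n * sum_f_R0 (fun k : nat =>
      Rabs (conv_pow F n (Z.of_nat k) - conv_pow F (S n) (Z.of_nat k))) N <= C.

Inductive gen_subgroup (S : Z -> Prop) : Z -> Prop :=
  | gen_in : forall z, S z -> gen_subgroup S z
  | gen_zero : gen_subgroup S 0%Z
  | gen_add : forall a b, gen_subgroup S a -> gen_subgroup S b -> gen_subgroup S (a + b)%Z
  | gen_opp : forall a, gen_subgroup S a -> gen_subgroup S (- a)%Z.

Definition supp (F : Z -> R) : Z -> Prop := fun k => F k <> 0.

Definition adapted (F : Z -> R) : Prop := forall z : Z, gen_subgroup (supp F) z.

(* translate delta_m * F : k |-> F (k - m) *)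
Definition translate (m : Z) (F : Z -> R) : Z -> R := fun k => F (k - m)%Z.

Definition aperiodic (F : Z -> R) : Prop := forall m : Z, adapted (translate m F).

(* Let m >= 0 generate the subgroup of Z generated by supp F; m > 0 since F is not delta_0, and
   Ft k := F (k m) lies in A and is adapted.  An adapted F in A is aperiodic: if the translate
   supp F + a only generated dZ with d <> 1, then d could not divide a, so supp F^(n) would lie in
   dZ - n a and consecutive powers F^(n), F^(n+1) would have disjoint supports, making
   n * sum_k |F^(n)(k) - F^(n+1)(k)| = 2 n unbounded.  Finally m <> 1, since otherwise F itself
   would be adapted, hence aperiodic. *)
From Stdlib Require Import Reals ZArith Wf_nat Lia Lra Classical FunctionalExtensionality.
From Coquelicot Require Series.
Open Scope R_scope.

Lemma sum_f_R0_neq0 (f : nat -> R) N :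
  sum_f_R0 f N <> 0 -> exists i, (i <= N)%nat /\ f i <> 0.
Proof.
  induction N as [|N IHN]; simpl; intros Hsum.
  - exists 0%nat; split; auto.
  - destruct (Req_dec (f (S N)) 0) as [Hf|Hf].
    + rewrite Hf, Rplus_0_r in Hsum. destruct (IHN Hsum) as [i [Hi Hfi]].
      exists i; split; auto.
    + exists (S N); split; auto.
Qed.

Lemma sum_f_R0_only0 (f : nat -> R) N :
  (forall i, (1 <= i)%nat -> f i = 0) -> sum_f_R0 f N = f 0%nat.
Proof.
  intros Hf. induction N as [|N IHN]; simpl; auto. rewrite IHN, (Hf (S N)) by lia. ring.
Qed.

Section SparseSums.
Variables (h : nat -> R) (d : nat).
Hypothesis d_pos : (1 <= d)%nat.
Hypothesis h_sparse : forall i, (forall j, i <> (j * d)%nat) -> h i = 0.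

Lemma sum_f_R0_within_block N k :
  (k < d)%nat -> sum_f_R0 h (N * d + k) = sum_f_R0 h (N * d).
Proof.
  induction k as [|k IHk]; intros Hk.
  - now rewrite Nat.add_0_r.
  - rewrite Nat.add_succ_r; simpl. rewrite IHk by lia.
    rewrite (h_sparse (S (N * d + k))); [ring|].
    intros j Hj. destruct (Nat.le_gt_cases j N).
    + assert (j * d <= N * d)%nat by nia. lia.
    + assert (j * d >= N * d + d)%nat by nia. lia.
Qed.

Lemma sum_f_R0_sparse N :
  sum_f_R0 h (N * d) = sum_f_R0 (fun j => h (j * d)%nat) N.
Proof.
  induction N as [|N IHN]; [reflexivity|].
  replace (S N * d)%nat with (S (N * d + (d - 1)))%nat by nia.
  simpl. rewrite sum_f_R0_within_block, IHN by lia.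
  replace (S (N * d + (d - 1))) with (d + N * d)%nat by lia. reflexivity.
Qed.

End SparseSums.

Lemma conv_nat F G k : conv F G (Z.of_nat k) =
  sum_f_R0 (fun j => F (Z.of_nat j) * G (Z.of_nat (k - j))) k.
Proof.
  unfold conv. replace (Z.of_nat k <? 0)%Z with false by (symmetry; apply Z.ltb_ge; lia).
  rewrite Nat2Z.id. apply sum_eq. intros i Hi. now rewrite Nat2Z.inj_sub by lia.
Qed.

Lemma conv_neg F G k : (k < 0)%Z -> conv F G k = 0.
Proof. intros Hk. unfold conv. now rewrite (proj2 (Z.ltb_lt _ _) Hk). Qed.

Lemma conv_ge0 F G :
  (forall k, 0 <= F k) -> (forall k, 0 <= G k) -> forall k, 0 <= conv F G k.
Proof.
  intros HF HG k. unfold conv. destruct (k <? 0)%Z; [lra|].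
  apply cond_pos_sum. intros; apply Rmult_le_pos; auto.
Qed.

Lemma conv_pow_ge0 F : (forall k, 0 <= F k) -> forall n k, 0 <= conv_pow F n k.
Proof.
  intros HF n; induction n as [|n IHn]; intros k; simpl.
  - unfold delta; destruct Z.eq_dec; lra.
  - now apply conv_ge0.
Qed.

Lemma infinite_sum_conv F G a b :
  (forall k, 0 <= F k) -> (forall k, 0 <= G k) ->
  infinite_sum (fun n => F (Z.of_nat n)) a ->
  infinite_sum (fun n => G (Z.of_nat n)) b ->
  infinite_sum (fun n => conv F G (Z.of_nat n)) (a * b).
Proof.
  intros HF HG Ha Hb. apply Series.is_series_Reals.
  apply Series.is_series_Reals in Ha. apply Series.is_series_Reals in Hb.
  eapply Series.is_series_ext; [|apply (Series.is_series_mult _ _ _ _ Ha Hb)].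
  - intros n. simpl. now rewrite conv_nat.
  - exists a. eapply Series.is_series_ext; [|apply Ha]. intros n; simpl.
    symmetry; apply Rabs_pos_eq; auto.
  - exists b. eapply Series.is_series_ext; [|apply Hb]. intros n; simpl.
    symmetry; apply Rabs_pos_eq; auto.
Qed.

Lemma infinite_sum_delta0 : infinite_sum (fun n => delta 0 (Z.of_nat n)) 1.
Proof.
  intros e He. exists 0%nat. intros n _. rewrite sum_f_R0_only0.
  - unfold R_dist, delta; simpl. rewrite Rminus_diag, Rabs_R0. lra.
  - intros i Hi. unfold delta. destruct Z.eq_dec; [lia|reflexivity].
Qed.

Lemma conv_pow_mass F : in_PZp F ->
  forall n, infinite_sum (fun k => conv_pow F n (Z.of_nat k)) 1.
Proof.
  intros [F01 [_ Fmass]] n. induction n as [|n IHn]; simpl.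
  - exact infinite_sum_delta0.
  - rewrite <- (Rmult_1_l 1). apply infinite_sum_conv; auto.
    + intros; apply F01.
    + apply conv_pow_ge0. intros; apply F01.
Qed.

Lemma conv_pow_supp_shift F d a : (forall k, supp F k -> (d | k + a)%Z) ->
  forall n k, supp (conv_pow F n) k -> (d | k + Z.of_nat n * a)%Z.
Proof.
  unfold supp. intros HF n; induction n as [|n IHn]; intros k Hk; simpl in Hk.
  - unfold delta in Hk. destruct Z.eq_dec; [|lra]. subst. exists 0%Z. ring.
  - unfold conv in Hk. destruct (Z.ltb_spec k 0); [lra|].
    destruct (sum_f_R0_neq0 _ _ Hk) as [j [_ Hj]].
    assert (Fj : F (Z.of_nat j) <> 0) by (intro E; apply Hj; rewrite E; ring).
    assert (Pj : conv_pow F n (k - Z.of_nat j)%Z <> 0) by (intro E; apply Hj; rewrite E; ring).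
    replace (k + Z.of_nat (S n) * a)%Z
      with ((Z.of_nat j + a) + (k - Z.of_nat j + Z.of_nat n * a))%Z
      by (rewrite Nat2Z.inj_succ; ring).
    apply Z.divide_add_r; auto.
Qed.

Lemma in_A_conv_pow_overlap F : in_A F ->
  ~ (forall n k, conv_pow F n k = 0 \/ conv_pow F (S n) k = 0).
Proof.
  intros [HP [C HC]] Hdisj.
  pose proof (conv_pow_ge0 F (fun k => proj1 (proj1 HP k))) as Hpos.
  destruct (archimed (2 * Rabs C + 2)) as [Hup _].
  set (n := Z.to_nat (up (2 * Rabs C + 2))).
  assert (Hn : INR n > 2 * Rabs C + 2).
  { unfold n. rewrite INR_IZR_INZ, Z2Nat.id; [lra|].
    apply le_IZR. pose proof (Rabs_pos C). lra. }
  destruct (conv_pow_mass F HP n (1/2) ltac:(lra)) as [N HN].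
  specialize (HN N (le_n _)). unfold R_dist in HN. apply Rabs_def2 in HN.
  set (mass := sum_f_R0 (fun k => conv_pow F n (Z.of_nat k)) N) in HN.
  assert (Hmass : mass <= sum_f_R0 (fun k =>
      Rabs (conv_pow F n (Z.of_nat k) - conv_pow F (S n) (Z.of_nat k))) N).
  { apply sum_Rle. intros k _. destruct (Hdisj n (Z.of_nat k)) as [E|E]; rewrite E.
    - apply Rabs_pos.
    - rewrite Rminus_0_r, Rabs_pos_eq; auto. lra. }
  specialize (HC n N). pose proof (pos_INR n).
  assert (INR n * mass <= C) by (eapply Rle_trans; [|apply HC]; apply Rmult_le_compat_l; lra).
  assert (INR n * (1/2) <= INR n * mass) by (apply Rmult_le_compat_l; lra).
  pose proof (Rle_abs C). lra.
Qed.

Lemma in_A_supp_shift_divides F d a : in_A F ->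
  (forall k, supp F k -> (d | k + a)%Z) -> (d | a)%Z.
Proof.
  intros HA Hsh. apply NNPP; intros Hda. apply (in_A_conv_pow_overlap F HA).
  intros n k. apply NNPP; intros Hboth. apply not_or_and in Hboth.
  destruct Hboth as [H1 H2].
  apply (conv_pow_supp_shift F d a Hsh) in H1, H2. apply Hda.
  replace a with ((k + Z.of_nat (S n) * a) - (k + Z.of_nat n * a))%Z
    by (rewrite Nat2Z.inj_succ; ring).
  now apply Z.divide_sub_r.
Qed.

Lemma gen_subgroup_mul S x : gen_subgroup S x -> forall q, gen_subgroup S (q * x)%Z.
Proof.
  intros Hx.
  assert (Hnat : forall n : nat, gen_subgroup S (Z.of_nat n * x)%Z).
  { induction n as [|n IHn]; [apply gen_zero|].
    rewrite Nat2Z.inj_succ, Z.mul_succ_l, Z.add_comm. now apply gen_add. }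
  intros q. destruct (Z_le_gt_dec 0 q).
  - rewrite <- (Z2Nat.id q) by lia. apply Hnat.
  - replace (q * x)%Z with (- (Z.of_nat (Z.to_nat (- q)) * x))%Z by (rewrite Z2Nat.id; lia).
    apply gen_opp, Hnat.
Qed.

Lemma gen_subgroup_divides S d :
  (forall k, S k -> (d | k)%Z) -> forall z, gen_subgroup S z -> (d | z)%Z.
Proof.
  intros HS z Hz. induction Hz.
  - auto.
  - apply Z.divide_0_r.
  - now apply Z.divide_add_r.
  - now apply Z.divide_opp_r.
Qed.

Lemma gen_subgroup_principal S :
  exists d : nat, forall z, gen_subgroup S z <-> (Z.of_nat d | z)%Z.
Proof.
  set (P := fun n : nat => (0 < n)%nat /\ gen_subgroup S (Z.of_nat n)).
  destruct (classic (exists n, P n)) as [Hex|Hno].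
  - destruct (dec_inh_nat_subset_has_unique_least_element P (fun n => classic (P n)) Hex)
      as [d [[[d_pos Sd] d_least] _]].
    exists d; intros z; split.
    + intros Sz. apply Z.mod_divide; [lia|].
      assert (Srem : gen_subgroup S (z mod Z.of_nat d)).
      { rewrite Z.mod_eq by lia.
        replace (z - Z.of_nat d * (z / Z.of_nat d))%Z
          with (z + - (z / Z.of_nat d) * Z.of_nat d)%Z by ring.
        apply gen_add; auto. now apply gen_subgroup_mul. }
      pose proof (Z.mod_pos_bound z (Z.of_nat d) ltac:(lia)).
      apply NNPP; intros Hrem.
      assert (d <= Z.to_nat (z mod Z.of_nat d))%nat; [|lia].
      apply d_least. split; [lia|]. now rewrite Z2Nat.id by lia.
    + intros [q ->]. now apply gen_subgroup_mul.
  - exists 0%nat; intros z; split.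
    + intros Sz. destruct (Z.eq_dec z 0) as [->|Hz]; [apply Z.divide_0_r|].
      exfalso. apply Hno. exists (Z.to_nat (Z.abs z)). split; [lia|].
      rewrite Z2Nat.id by lia.
      destruct (Z.abs_eq_or_opp z) as [E|E]; rewrite E; auto. now apply gen_opp.
    + intros [q ->]. rewrite Z.mul_0_r. apply gen_zero.
Qed.

Lemma gen_subgroup_rescale S m :
  (forall k, S k -> (m | k)%Z) ->
  forall z, gen_subgroup S z ->
  exists y, z = (y * m)%Z /\ gen_subgroup (fun k => S (k * m)%Z) y.
Proof.
  intros HS z Hz. induction Hz as [z Sz| |a b _ [y1 [-> G1]] _ [y2 [-> G2]]|a _ [y [-> G]]].
  - destruct (HS z Sz) as [y ->]. exists y. split; [reflexivity|]. now apply gen_in.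
  - exists 0%Z. split; [ring|]. apply gen_zero.
  - exists (y1 + y2)%Z. split; [ring|]. now apply gen_add.
  - exists (- y)%Z. split; [ring|]. now apply gen_opp.
Qed.

Lemma adapted_aperiodic F : in_A F -> adapted F -> aperiodic F.
Proof.
  intros HA Had a.
  destruct (gen_subgroup_principal (supp (translate a F))) as [d Hd].
  assert (Hsh : forall k, supp F k -> (Z.of_nat d | k + a)%Z).
  { intros k Hk. apply Hd, gen_in. unfold supp, translate.
    now replace (k + a - a)%Z with k by ring. }
  pose proof (in_A_supp_shift_divides F _ a HA Hsh) as Hda.
  assert (Hd1 : Z.of_nat d = 1%Z).
  { apply Z.divide_1_r_nonneg; [lia|].
    apply (gen_subgroup_divides (supp F)); [|apply Had].
    intros k Hk. replace k with ((k + a) - a)%Z by ring.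
    apply Z.divide_sub_r; auto. }
  intros z. apply Hd. rewrite Hd1. apply Z.divide_1_l.
Qed.

Section Rescale.
Variables (F : Z -> R) (d : nat).
Hypothesis d_pos : (1 <= d)%nat.
Hypothesis supp_F : forall k, supp F k -> (Z.of_nat d | k)%Z.

Let G := fun k => F (k * Z.of_nat d)%Z.

Lemma vanishes_off_multiples (P : Z -> R) : (forall k, supp P k -> (Z.of_nat d | k)%Z) ->
  forall i, (forall j, i <> (j * d)%nat) -> P (Z.of_nat i) = 0.
Proof.
  intros HP i Hi. apply NNPP; intros HPi. apply HP in HPi. destruct HPi as [z Hz].
  apply (Hi (Z.to_nat z)), Nat2Z.inj. rewrite Nat2Z.inj_mul, Z2Nat.id; nia.
Qed.

Lemma conv_pow_rescale n k : conv_pow G n k = conv_pow F n (k * Z.of_nat d)%Z.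
Proof.
  revert k; induction n as [|n IHn]; intros k; simpl.
  - unfold delta. destruct (Z.eq_dec k 0), (Z.eq_dec (k * Z.of_nat d) 0); auto; nia.
  - destruct (Z_lt_le_dec k 0).
    + rewrite !conv_neg by nia. reflexivity.
    + rewrite <- (Z2Nat.id k), <- Nat2Z.inj_mul, !conv_nat by lia.
      rewrite (sum_f_R0_sparse (fun i => F (Z.of_nat i) *
                                         conv_pow F n (Z.of_nat (Z.to_nat k * d - i)))) by
        (auto; intros i Hi; rewrite (vanishes_off_multiples F supp_F i Hi); ring).
      apply sum_eq. intros j _. unfold G. rewrite IHn, <- !Nat2Z.inj_mul.
      now rewrite Nat.mul_sub_distr_r.
Qed.

Lemma in_PZp_rescale : in_PZp F -> in_PZp G.
Proof.
  intros [F01 [Fneg Fmass]]. split; [|split].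
  - intros k; apply F01.
  - intros k Hk; apply Fneg; nia.
  - intros e He. destruct (Fmass e He) as [N0 HN0]. exists N0. intros n Hn.
    replace (sum_f_R0 (fun n => G (Z.of_nat n)) n)
      with (sum_f_R0 (fun n => F (Z.of_nat n)) (n * d)); [apply HN0; nia|].
    rewrite (sum_f_R0_sparse (fun i => F (Z.of_nat i)))
      by (auto; exact (vanishes_off_multiples F supp_F)).
    apply sum_eq. intros j _. unfold G. now rewrite Nat2Z.inj_mul.
Qed.

Lemma in_A_rescale : in_A F -> in_A G.
Proof.
  intros [HP [C HC]]. split; [now apply in_PZp_rescale|]. exists C. intros n N.
  assert (supp_pow : forall m k, supp (conv_pow F m) k -> (Z.of_nat d | k)%Z).
  { intros m k Hk.
    assert (Hsh : forall j, supp F j -> (Z.of_nat d | j + 0)%Z)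
      by (intros j Hj; rewrite Z.add_0_r; auto).
    pose proof (conv_pow_supp_shift F _ 0 Hsh m k Hk) as Hdiv.
    now rewrite Z.mul_0_r, Z.add_0_r in Hdiv. }
  specialize (HC n (N * d)%nat).
  rewrite (sum_f_R0_sparse (fun k =>
    Rabs (conv_pow F n (Z.of_nat k) - conv_pow F (S n) (Z.of_nat k)))) in HC; auto.
  - eapply Rle_trans; [|apply HC]. right. f_equal. apply sum_eq. intros j _.
    now rewrite !conv_pow_rescale, Nat2Z.inj_mul.
  - intros i Hi. rewrite (vanishes_off_multiples _ (supp_pow n) i Hi),
                         (vanishes_off_multiples _ (supp_pow (S n)) i Hi).
    rewrite Rminus_diag; apply Rabs_R0.
Qed.

End Rescale.

Lemma in_PZp_pos_supp F : in_PZp F -> F <> delta 0 -> exists s, (0 < s)%Z /\ supp F s.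
Proof.
  intros [_ [Fneg Fmass]] Hnd. apply NNPP; intros Hno. apply Hnd.
  assert (Fnz : forall k, k <> 0%Z -> F k = 0).
  { intros k Hk. destruct (Z_lt_le_dec k 0); auto.
    apply NNPP; intros Fk. apply Hno. exists k. split; auto; lia. }
  assert (F0 : F 0%Z = 1).
  { apply (uniqueness_sum (fun n => F (Z.of_nat n))); auto.
    intros e He. exists 0%nat. intros n _. rewrite sum_f_R0_only0.
    - simpl. unfold R_dist. rewrite Rminus_diag, Rabs_R0. lra.
    - intros i Hi. apply Fnz. lia. }
  apply functional_extensionality. intros k. unfold delta.
  destruct Z.eq_dec as [->|Hk]; auto.
Qed.

Theorem lemma4p3 (F : Z -> R) :
  in_A F -> F <> delta 0 -> ~ aperiodic F ->
  exists (m : nat) (Ft : Z -> R),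
    (2 <= m)%nat /\ in_A Ft /\ aperiodic Ft /\
    (forall k : Z, supp F k -> exists j : nat, k = (Z.of_nat j * Z.of_nat m)%Z) /\
    (forall k : nat, F (Z.of_nat k * Z.of_nat m)%Z = Ft (Z.of_nat k)).
Proof.
  intros HA Hnd Hnap.
  destruct (in_PZp_pos_supp F (proj1 HA) Hnd) as [s [s_pos Fs]].
  destruct (gen_subgroup_principal (supp F)) as [m Hm].
  assert (supp_F : forall k, supp F k -> (Z.of_nat m | k)%Z) by (intros; apply Hm, gen_in; auto).
  assert (m_pos : (1 <= m)%nat).
  { destruct (supp_F s Fs) as [q Hq]. destruct m; [lia|]. lia. }
  set (Ft := fun k => F (k * Z.of_nat m)%Z).
  assert (Ft_adapted : adapted Ft).
  { destruct (gen_subgroup_rescale (supp F) _ supp_F (Z.of_nat m))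
      as [y [Hy Gy]]; [apply Hm, Z.divide_refl|].
    replace y with 1%Z in Gy by nia.
    intros z. rewrite <- (Z.mul_1_r z). now apply gen_subgroup_mul. }
  assert (Ft_A : in_A Ft) by now apply in_A_rescale.
  exists m, Ft. split; [|split; [exact Ft_A|split; [|split; [|reflexivity]]]].
  - destruct (Nat.eq_dec m 1) as [->|]; [|lia]. exfalso. apply Hnap, adapted_aperiodic; auto.
    intros z. apply Hm, Z.divide_1_l.
  - now apply adapted_aperiodic.
  - intros k Hk. destruct (supp_F k Hk) as [q ->]. exists (Z.to_nat q).
    rewrite Z2Nat.id; [reflexivity|].
    destruct (Z_lt_le_dec q 0); [|lia].
    exfalso. apply Hk, (proj1 (proj2 (proj1 HA))). nia.
Qed.
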